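(* For all $k\in\mathbb N$ the following hold in the $q$-shuffle algebra $\mathbb V$: $$[W_0,W_{k+1}]=[W_{-k},W_1]=(1-q^{-2})(\tilde G_{k+1}-G_{k+1}),$$ $$[W_0,G_{k+1}]_q=[\tilde G_{k+1},W_0]_q=(q-q^{-1})W_{-k-1},$$ $$[G_{k+1},W_1]_q=[W_1,\tilde G_{k+1}]_q=(q-q^{-1})W_{k+2}.$$
   Context: Let $\mathbb F$ be a field and let $q\in\mathbb F$ be nonzero and not a root of unity. Let $\mathbb V$ be the free associative $\mathbb F$-algebra on noncommuting $x,y$, with basis the words (including $1$). Juxtaposition denotes concatenation. Set $\langle x,x\rangle=\langle y,y\rangle=2$ and $\langle x,y\rangle=\langle y,x\rangle=-2$. The $q$-shuffle product $\star$ is the bilinear product determined as follows: - $1\star v=v\star 1=v$; - for nontrivial words $u=u_1\cdots u_r$ and $v=v_1\cdots v_s$, $$u\star v=u_1((u_2\cdots u_r)\star v)+v_1(u\star(v_2\cdots v_s))q^{\langle u_1,v_1\rangle+\cdots+\langle u_r,v_1\rangle}.$$ This makes $\mathbb V$ an associative algebra, the $q$-shuffle algebra. Write $[a,b]=a\star b-b\star a$ and $[a,b]_q=q\,a\star b-q^{-1}b\star a$. For $k\in\mathbb N$: - $W_{-k}=xyx\cdots x$ is the alternating word of length $2k+1$ beginning and ending with $x$; - $W_{k+1}=yxy\cdots y$ is the alternating word of length $2k+1$ beginning and ending with $y$; - $G_k=yxyx\cdots yx$ is the word of length $2k$; - $\tilde G_k=xyxy\cdots xy$ is the word of length $2k$;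 - $G_0=\tilde G_0=1$. *)

From HB Require Import structures.
From mathcomp Require Import all_boot all_order all_algebra.
From mathcomp Require Import finmap.
From mathcomp.multinomials Require Import monalg.
Set Implicit Arguments. Unset Strict Implicit. Unset Printing Implicit Defensive.
Import GRing.Theory.
Local Open Scope ring_scope.

(* Letters: true = x, false = y.  Words = seq bool (the empty word is 1). *)
Notation word := (seq bool).
Definition lx : bool := true.
Definition ly : bool := false.

(* The free associative algebra V on x, y, as a vector space: the free
   F-vector space with basis the words (finitely supported coefficients). *)
Definition V (F : fieldType) := {malg F[word]}.

Section QShuffle.
Variables (F : fieldType) (q : F).

Definition bform (a b : bool) : int := if a == b then 2 else -2.

Definition lcons (a : bool) (p : V F) : V F :=
  \sum_(w <- msupp p) << p@_w *g (a :: w) >>.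

Fixpoint wshuffle (u v : word) {struct u} : V F :=
  match u with
  | [::] => << v >>
  | a :: u' =>
      let fix sh2 (v : word) : V F :=
        match v with
        | [::] => << u >>
        | b :: v' =>
            lcons a (wshuffle u' v) +
            q ^ (\sum_(c <- u) bform c b) *: lcons b (sh2 v')
        end
      in sh2 v
  end.

Definition qstar (p r : V F) : V F :=
  \sum_(w1 <- msupp p) \sum_(w2 <- msupp r) (p@_w1 * r@_w2) *: wshuffle w1 w2.

Definition qcomm (p r : V F) : V F := qstar p r - qstar r p.
Definition qqcomm (p r : V F) : V F := q *: qstar p r - q^-1 *: qstar r p.

End QShuffle.

(* W_{-k} = x y x ... x, length 2k+1 *)
Definition Wneg_w (k : nat) : word := mkseq (fun i => ~~ odd i) k.*2.+1.
(* W_{k+1} = y x y ... y, length 2k+1 *)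
Definition Wpos_w (k : nat) : word := mkseq (fun i => odd i) k.*2.+1.
(* G_k = y x y x ... y x, length 2k *)
Definition G_w (k : nat) : word := mkseq (fun i => odd i) k.*2.
(* tilde G_k = x y x y ... x y, length 2k *)
Definition Gt_w (k : nat) : word := mkseq (fun i => ~~ odd i) k.*2.

Definition Wneg (F : fieldType) (k : nat) : V F := << Wneg_w k >>.
Definition Wpos (F : fieldType) (k : nat) : V F := << Wpos_w k >>.  (* = W_{k+1} *)
Definition Gw (F : fieldType) (k : nat) : V F := << G_w k >>.
Definition Gtw (F : fieldType) (k : nat) : V F := << Gt_w k >>.

(* For a letter b, the shuffle recursions read
     b * (c v) = b c v + q^<b,c> c (b * v),   (c v) * b = c (v * b) + q^<c v,b> b c v.
   Prepending a pair c, ~c of opposite letters to v leaves every exponent of b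
   unchanged, since <b,c> + <b,~c> = 0.  Hence for any scalars alpha, beta the
   combination alpha (b * v) - beta (v * b) obeys a two-step recursion: its value
   on c ~c v is c ~c applied to its value on v, plus two monomials b c ~c v and
   c b ~c v.  On alternating words these corrections either vanish or telescope,
   and all six identities follow by induction on k. *)

From HB Require Import structures.
From mathcomp Require Import all_boot all_order all_algebra.
From mathcomp Require Import finmap.
From mathcomp.multinomials Require Import monalg.
From mathcomp Require Import ring.
Set Implicit Arguments.
Unset Strict Implicit.
Import GRing.Theory.
Local Open Scope ring_scope.

Lemma bform_addNl a b : bform a b + bform (~~ a) b = 0.
Proof. by case: a; case: b; rewrite /bform /= ?addrN ?addNr. Qed.

Lemma bform_addNr a b : bform a b + bform a (~~ b) = 0.
Proof. by case: a; case: b; rewrite /bform /= ?addrN ?addNr. Qed.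

Lemma exprz_bformxx (R : unitRingType) (x : R) a : x ^ bform a a = x ^+ 2.
Proof. by rewrite /bform eqxx. Qed.

Lemma exprz_bformNl (R : unitRingType) (x : R) a : x ^ bform (~~ a) a = x ^- 2.
Proof. by case: a. Qed.

Lemma exprz_bformNr (R : unitRingType) (x : R) a : x ^ bform a (~~ a) = x ^- 2.
Proof. by case: a. Qed.

Definition wform (u : word) (b : bool) : int := \sum_(c <- u) bform c b.

Lemma wform_cons c u b : wform (c :: u) b = bform c b + wform u b.
Proof. exact: big_cons. Qed.

(* The alternating word of length n starting with a.  By computation,
   W_{-k} = alt x (2k+1), W_{k+1} = alt y (2k+1), G_k = alt y (2k) and
   tilde G_k = alt x (2k). *)
Definition alt (a : bool) (n : nat) : word := mkseq (fun i => a (+) odd i) n.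

Lemma altS a n : alt a n.+1 = a :: alt (~~ a) n.
Proof.
rewrite /alt /mkseq -add1n iotaD /= addbF; congr (_ :: _).
rewrite (iotaDl 1 0 n) -map_comp; apply: eq_map => i /=.
by rewrite addbN addNb.
Qed.

Lemma altSS a n : alt a n.+2 = a :: ~~ a :: alt a n.
Proof. by rewrite !altS negbK. Qed.

Lemma wform_alt_even a n b : wform (alt a n.*2) b = 0.
Proof.
elim: n => [|n IHn]; first exact: big_nil.
by rewrite doubleS altSS !wform_cons IHn addr0 bform_addNl.
Qed.

Section LeftConcatenation.
Variable F : fieldType.

Lemma lconsE a (p : V F) u :
  (lcons a p)@_u = if u is c :: w then (c == a)%:R * p@_w else 0.
Proof.
rewrite /lcons raddf_sum; case: u => [|c w] /=.
  by rewrite big1 // => v _; rewrite mcoeffU.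
rewrite [in RHS](monalgE p) raddf_sum big_distrr /=; apply: eq_bigr => v _.
by rewrite !mcoeffU eqseq_cons eq_sym; case: (c == a); rewrite ?mul1r ?mul0r.
Qed.

Lemma lcons_is_linear a : linear (lcons a : V F -> V F).
Proof.
move=> k p r; apply/malgP => -[|c w].
  by rewrite mcoeffD mcoeffZ !lconsE mulr0 addr0.
by rewrite mcoeffD mcoeffZ !lconsE mcoeffD mcoeffZ mulrDr mulrCA.
Qed.

HB.instance Definition _ a :=
  GRing.isLinear.Build F (V F) (V F) *:%R (lcons a) (lcons_is_linear a).

Lemma lconsD a : {morph @lcons F a : p r / p + r >-> p + r}.
Proof. exact: linearD. Qed.

Lemma lconsB a : {morph @lcons F a : p r / p - r >-> p - r}.
Proof. exact: linearB. Qed.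

Lemma lconsZ a k : {morph @lcons F a : p / k *: p >-> k *: p}.
Proof. exact: linearZZ. Qed.

Lemma lconsU a w : lcons a << w >> = << a :: w >> :> V F.
Proof.
apply/malgP => -[|c v]; rewrite lconsE !mcoeffU // eqseq_cons eq_sym.
by case: (a == c); rewrite ?mul1r ?mul0r // mcoeffU.
Qed.

End LeftConcatenation.

Section LetterShuffle.
Variables (F : fieldType) (q : F).
Hypothesis q_neq0 : q != 0.

Lemma qstarU u v : qstar q << u >> << v >> = wshuffle q u v.
Proof. by rewrite /qstar !msuppU oner_eq0 !big_seq_fset1 !mcoeffUU mulr1 scale1r. Qed.

Lemma shuffle_letter_cons b c v :
  wshuffle q [:: b] (c :: v) =
  << [:: b, c & v] >> + q ^ bform b c *: lcons c (wshuffle q [:: b] v).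
Proof. by rewrite /= lconsU big_cons big_nil addr0. Qed.

Lemma shuffle_cons_letter b c v :
  wshuffle q (c :: v) [:: b] =
  lcons c (wshuffle q v [:: b]) + q ^ wform (c :: v) b *: << [:: b, c & v] >>.
Proof. by rewrite /= lconsU. Qed.

Definition letter_comm (alpha beta : F) (b : bool) (v : word) : V F :=
  alpha *: wshuffle q [:: b] v - beta *: wshuffle q v [:: b].

Lemma letter_comm_cons2 alpha beta b c v :
  letter_comm alpha beta b [:: c, ~~ c & v] =
    (alpha - beta * q ^ wform v b) *: << [:: b, c, ~~ c & v] >>
  + (alpha * q ^ bform b c - beta * q ^ (bform (~~ c) b + wform v b))
      *: << [:: c, b, ~~ c & v] >>
  + lcons c (lcons (~~ c) (letter_comm alpha beta b v)).
Proof.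
rewrite /letter_comm !shuffle_letter_cons !shuffle_cons_letter.
rewrite !wform_cons addrA bform_addNl add0r.
rewrite !lconsB !lconsD !lconsZ !lconsU [q ^ bform b c *: _]scalerDr scalerA.
rewrite -expfzDr // bform_addNr expr0z scale1r.
(* Abstracting the vectors keeps [ring] from unfolding [wshuffle] in atoms. *)
move: << _ >> << _ >> (lcons c _) (lcons c _) => X Y S T.
apply/malgP => u; rewrite !(mcoeffD, mcoeffN, mcoeffZ); ring.
Qed.

Lemma letter_comm_alt_even_neg a n :
  letter_comm q q^-1 (~~ a) (alt a n.*2) = (q - q^-1) *: << alt (~~ a) n.*2.+1 >>.
Proof.
elim: n => [|n IHn]; first by rewrite /letter_comm scalerBl altS.
rewrite doubleS [in LHS]altSS letter_comm_cons2 IHn wform_alt_even !addr0.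
rewrite !lconsZ !lconsU !altS !negbK exprz_bformNl exprz_bformxx expr0z.
apply/malgP => u; rewrite !(mcoeffD, mcoeffN, mcoeffZ); by field.
Qed.

Lemma letter_comm_alt_even_same a n :
  letter_comm q^-1 q a (alt a n.*2) = (q^-1 - q) *: << alt a n.*2.+1 >>.
Proof.
elim: n => [|n IHn]; first by rewrite /letter_comm scalerBl altS.
rewrite doubleS [in LHS]altSS letter_comm_cons2 IHn wform_alt_even !addr0.
rewrite !lconsZ !lconsU !altS !negbK exprz_bformNl exprz_bformxx expr0z.
apply/malgP => u; rewrite !(mcoeffD, mcoeffN, mcoeffZ); by field.
Qed.

Lemma letter_comm_alt_odd a n :
  letter_comm 1 1 (~~ a) (alt a n.*2.+1)
  = (1 - q^-2) *: (<< alt (~~ a) n.*2.+2 >> - << alt a n.*2.+2 >>).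
Proof.
elim: n => [|n IHn].
  rewrite /letter_comm (altS a 0) shuffle_letter_cons shuffle_cons_letter !lconsU.
  rewrite wform_cons [wform [::] _]big_nil addr0 !altS !negbK.
  rewrite exprz_bformNl exprz_bformNr.
  apply/malgP => u; rewrite !(mcoeffD, mcoeffN, mcoeffZ); by field.
rewrite doubleS [in LHS]altSS letter_comm_cons2 IHn !altS !negbK.
rewrite wform_cons wform_alt_even !addr0 expfzDr //.
rewrite !lconsZ !lconsB !lconsU exprz_bformNl exprz_bformNr exprz_bformxx.
apply/malgP => u; rewrite !(mcoeffD, mcoeffN, mcoeffZ); by field.
Qed.

Lemma qcomm_letterl b v : qcomm q << [:: b] >> << v >> = letter_comm 1 1 b v.
Proof. by rewrite /qcomm /letter_comm !qstarU !scale1r. Qed.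

Lemma qcomm_letterr v b : qcomm q << v >> << [:: b] >> = - letter_comm 1 1 b v.
Proof. by rewrite /qcomm /letter_comm !qstarU !scale1r opprB. Qed.

Lemma qqcomm_letterl b v : qqcomm q << [:: b] >> << v >> = letter_comm q q^-1 b v.
Proof. by rewrite /qqcomm /letter_comm !qstarU. Qed.

Lemma qqcomm_letterr v b :
  qqcomm q << v >> << [:: b] >> = - letter_comm q^-1 q b v.
Proof. by rewrite /qqcomm /letter_comm !qstarU opprB. Qed.

End LetterShuffle.

Theorem proposition5p7 (F : fieldType) (q : F)
  (q_neq0 : q != 0) (q_not_root : forall n : nat, (0 < n)%N -> q ^+ n != 1)
  (k : nat) :
  qcomm q (Wneg F 0) (Wpos F k) = (1 - q ^- 2) *: (Gtw F k.+1 - Gw F k.+1)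
   /\ qcomm q (Wneg F k) (Wpos F 0) = (1 - q ^- 2) *: (Gtw F k.+1 - Gw F k.+1)
   /\ qqcomm q (Wneg F 0) (Gw F k.+1) = (q - q^-1) *: Wneg F k.+1
   /\ qqcomm q (Gtw F k.+1) (Wneg F 0) = (q - q^-1) *: Wneg F k.+1
   /\ qqcomm q (Gw F k.+1) (Wpos F 0) = (q - q^-1) *: Wpos F k.+1
   /\ qqcomm q (Wpos F 0) (Gtw F k.+1) = (q - q^-1) *: Wpos F k.+1.
Proof.
split; first by rewrite qcomm_letterl (letter_comm_alt_odd q_neq0 ly k).
split.
  by rewrite qcomm_letterr (letter_comm_alt_odd q_neq0 lx k) -scalerN opprB.
split; first by rewrite qqcomm_letterl (letter_comm_alt_even_neg q_neq0 ly k.+1).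
split.
  by rewrite qqcomm_letterr (letter_comm_alt_even_same q_neq0 lx k.+1) -scaleNr opprB.
split.
  by rewrite qqcomm_letterr (letter_comm_alt_even_same q_neq0 ly k.+1) -scaleNr opprB.
by rewrite qqcomm_letterl (letter_comm_alt_even_neg q_neq0 lx k.+1).
Qed.
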